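(* Let $\tilde L$ be a minimum-size counterexample. For every meet-irreducible element $m$ of $\tilde L$ there exists a join-irreducible element $j$ of $\tilde L$ such that $j\le m$ and $|{\uparrow}j|=\frac{|\tilde L|+1}{2}$.
   Context: For a poset $P$, $x$ upper covers $y$ (and $y$ lower covers $x$) if $y<x$ with nothing strictly between. Join-irreducible: upper covers exactly one element; meet-irreducible: lower covers exactly one element. For $x\in P$, ${\uparrow}x=\{y\in P: x\le y\}$. A counterexample is a finite lattice $L$ with $|L|>1$ in which every join-irreducible $j$ satisfies $|{\uparrow}j|>|L|/2$; a minimum-size counterexample is a counterexample $\tilde L$ such that no counterexample has fewer elements. *)

From mathcomp Require Import all_boot all_order.
Set Implicit Arguments. Unset Strict Implicit. Unset Printing Implicit Defensive.
Import Order.TTheory.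
Local Open Scope order_scope.

Section LatticeDefs.
Context {disp : Order.disp_t} {L : finLatticeType disp}.

Definition covers (x y : L) : bool :=
  (y < x) && [forall z : L, ~~ ((y < z) && (z < x))].

Definition join_irr (j : L) : bool := #|[set y : L | covers j y]| == 1%N.

Definition meet_irr (m : L) : bool := #|[set x : L | covers x m]| == 1%N.

Definition upset (x : L) : {set L} := [set y : L | x <= y].

End LatticeDefs.

(* A counterexample: finite lattice with more than one element in which
   every join-irreducible j satisfies |up j| > |L|/2, i.e. 2|up j| > |L|. *)
Definition counterexample {disp : Order.disp_t} (L : finLatticeType disp) : Prop :=
  (1 < #|L|)%N /\
  forall j : L, join_irr j -> (#|L| < 2 * #|upset j|)%N.

Definition min_counterexample {disp : Order.disp_t} (L : finLatticeType disp) : Prop :=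
  counterexample L /\
  forall (disp' : Order.disp_t) (L' : finLatticeType disp'),
    counterexample L' -> (#|L| <= #|L'|)%N.

From HB Require Import structures.
From mathcomp Require Import all_boot all_order zify.
Import Order.TTheory.
Local Open Scope order_scope.
Set Implicit Arguments. Unset Strict Implicit.

(* Deleting a meet-irreducible element m from a finite lattice leaves a
   lattice with one element fewer: meets are unchanged, and a join equal to m
   is replaced by the unique upper cover m+ of m.  By minimality the smaller
   lattice is no counterexample, so it has a join-irreducible j whose up-set
   is at most half of it.  If j is still join-irreducible in L, its up-set
   grows by at most one (namely by m, when j <= m), which pins |up j| to
   (|L|+1)/2 and forces j <= m.  Otherwise j = m+, and then m itself is
   join-irreducible in L (its unique lower cover is the meet of m with the
   second lower cover of m+), with |up m| = |up m+| + 1. *)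

Section FiniteLattice.
Context {disp : Order.disp_t} {L : finLatticeType disp}.
Implicit Types x y : L.

Definition downset x : {set L} := [set y | y <= x].

Lemma card_downset_lt x y : x < y -> (#|downset x| < #|downset y|)%N.
Proof.
move=> xy; apply: proper_card; apply/properP; split.
  by apply/subsetP => z; rewrite !inE => zx; exact: le_trans zx (ltW xy).
by exists y; rewrite !inE ?lexx // lt_geF.
Qed.

Lemma exists_lower_cover x y : y < x -> exists2 c, y <= c & covers x c.
Proof.
move=> yx; pose P z := (y <= z) && (z < x).
have Py : P y by rewrite /P lexx yx.
case: (arg_maxnP (fun z => #|downset z|) Py) => c /andP[yc cx] cmax.
exists c => //; rewrite /covers cx; apply/forallP => z.
apply/negP => /andP[cz zx].
have := cmax z; rewrite /P (le_trans yc (ltW cz)) zx => /(_ isT).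
by rewrite /geq /= leqNgt card_downset_lt.
Qed.

Lemma exists_upper_cover x y : y < x -> exists2 c, covers c y & c <= x.
Proof.
move=> yx; pose P z := (y < z) && (z <= x).
have Px : P x by rewrite /P lexx yx.
case: (arg_minnP (fun z => #|downset z|) Px) => c /andP[yc cx] cmin.
exists c => //; rewrite /covers yc; apply/forallP => z.
apply/negP => /andP[yz zc].
have := cmin z; rewrite /P yz (le_trans (ltW zc) cx) => /(_ isT).
by rewrite leqNgt card_downset_lt.
Qed.

Lemma join_irr_greatest_below x d :
  d < x -> (forall y, y < x -> y <= d) -> join_irr x.
Proof.
move=> dx below; apply/cards1P; exists d; apply/setP => y; rewrite !inE.
apply/idP/eqP => [/andP[yx /forallP yx_cov]|->].
  apply/eqP; rewrite eq_le below //=; apply: contraT => ndy.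
  have yd : y < d.
    by rewrite lt_neqAle below // andbT; apply: contra ndy => /eqP ->.
  by have := yx_cov d; rewrite yd dx.
rewrite /covers dx; apply/forallP => z; apply/negP => /andP[dz zx].
by have := below z zx; rewrite (lt_geF dz).
Qed.

End FiniteLattice.

Section Puncture.
Context {disp : Order.disp_t} {L : finLatticeType disp} (m : L).
Hypothesis m_irr : meet_irr m.
Implicit Types x y : L.

Definition msucc : L := odflt m [pick x | covers x m].

Lemma covers_msucc_eq c : covers c m -> c = msucc.
Proof.
have [a m_covers] := cards1P m_irr.
have eq_a x : covers x m = (x == a).
  by have /setP/(_ x) := m_covers; rewrite !inE.
move=> cm; rewrite /msucc; case: pickP => [x|/(_ a)]; last by rewrite eq_a eqxx.
by rewrite eq_a => /eqP ->; apply/eqP; rewrite -eq_a.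
Qed.

Lemma covers_msucc : covers msucc m.
Proof.
have [a m_covers] := cards1P m_irr.
have : a \in [set x | covers x m] by rewrite m_covers set11.
by rewrite inE => /[dup] /covers_msucc_eq <-.
Qed.

Lemma lt_msucc : m < msucc.
Proof. by case/andP: covers_msucc. Qed.

Lemma msucc_le x : m < x -> msucc <= x.
Proof. by case/exists_upper_cover => c /covers_msucc_eq ->. Qed.

Lemma msucc_neq : msucc != m.
Proof. by rewrite gt_eqF // lt_msucc. Qed.

(* Indexed by the proof of meet-irreducibility, which the lattice structure
   below needs, so that this structure can be inferred from the type. *)
Record punctured (irr : meet_irr m) :=
  Punct { punct_val :> L; punct_neq : punct_val != m }.

Arguments Punct {irr punct_val}.
Local Notation P := (punctured m_irr).

HB.instance Definition _ := [isSub of P for @punct_val m_irr].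
HB.instance Definition _ := [Finite of P by <:].
HB.instance Definition _ := [SubChoice_isSubPOrder of P by <: with disp].
Implicit Types u v w : P.

Lemma punct_leE u v : (u <= v) = (val u <= val v).
Proof. by []. Qed.

Lemma punct_ltE u v : (u < v) = (val u < val v).
Proof. by rewrite !lt_def punct_leE. Qed.

Lemma meet_punct_neq u v : val u `&` val v != m.
Proof.
apply/negP => /eqP uv_m.
have m_lt w : val w >= val u `&` val v -> m < val w.
  by rewrite lt_neqAle eq_sym punct_neq uv_m.
have : msucc <= val u `&` val v by rewrite lexI !msucc_le ?m_lt ?leIl ?leIr.
by rewrite uv_m lt_geF // lt_msucc.
Qed.

(* The join of two elements of [P] is [m] only if both lie below [m]; their
   least upper bound in [P] is then [msucc]. *)
Definition punct_join_val u v : L :=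
  if val u `|` val v == m then msucc else val u `|` val v.

Lemma punct_join_val_neq u v : punct_join_val u v != m.
Proof. by rewrite /punct_join_val; case: ifPn => // _; exact: msucc_neq. Qed.

Definition punct_meet u v : P := Punct (meet_punct_neq u v).
Definition punct_join u v : P := Punct (punct_join_val_neq u v).

Lemma punct_meetP u v w : (u <= punct_meet v w) = (u <= v) && (u <= w).
Proof. by rewrite !punct_leE /= lexI. Qed.

Lemma punct_joinP u v w : (punct_join u v <= w) = (u <= w) && (v <= w).
Proof.
rewrite !punct_leE /= /punct_join_val -leUx; case: ifPn => // /eqP ->.
apply/idP/idP => [|mw]; first exact/le_trans/ltW/lt_msucc.
by apply: msucc_le; rewrite lt_neqAle eq_sym punct_neq mw.
Qed.

HB.instance Definition _ :=
  Order.POrder_MeetJoin_isLattice.Build disp P punct_meetP punct_joinP.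

Lemma card_punctured : #|{: P}| = #|L|.-1.
Proof. by rewrite card_sub cardC1. Qed.

Lemma punct_covers u v : covers (val u) (val v) -> covers u v.
Proof.
rewrite /covers punct_ltE => /andP[-> /forallP no_between].
by apply/forallP => w; rewrite !punct_ltE.
Qed.

Lemma punct_coversE u v :
  covers u v -> covers (val u) (val v) \/ val v < m < val u.
Proof.
rewrite /covers punct_ltE => /andP[-> /forallP no_between] /=.
have [|/forallPn[x]] := boolP [forall x, ~~ ((val v < x) && (x < val u))].
  by left.
rewrite negbK; have [-> |xm between] := eqVneq x m; first by right.
by have := no_between (Punct xm); rewrite !punct_ltE between.
Qed.

Lemma punct_join_irrE u : val u != msucc -> join_irr u = join_irr (val u).
Proof.
move=> u_msucc; rewrite /join_irr.
suff -> : [set y | covers (val u) y] = val @: [set v | covers u v].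
  by rewrite card_imset //; exact: val_inj.
apply/setP => y; rewrite inE; apply/idP/imsetP => [uy|[v]].
  have ym : y != m.
    by apply: contra u_msucc => /eqP ym; subst y; rewrite -(covers_msucc_eq uy).
  by exists (Punct ym); rewrite // inE punct_covers.
rewrite inE => uv ->; case: (punct_coversE uv) => [// | /andP[vm mu]].
have msucc_u : msucc < val u by rewrite lt_neqAle eq_sym u_msucc msucc_le.
case/andP: uv => _ /forallP/(_ (Punct msucc_neq)).
by rewrite !punct_ltE /= msucc_u (lt_trans vm lt_msucc).
Qed.

Definition punct_msucc : P := Punct msucc_neq.

Lemma punct_join_irr_msucc u :
  join_irr u -> ~~ join_irr (val u) -> u = punct_msucc.
Proof.
move=> u_irr uL_red; apply: val_inj => /=; apply/eqP.
by apply: contraNT uL_red => ne; rewrite -punct_join_irrE.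
Qed.

Lemma punct_join_irr_m u : join_irr u -> ~~ join_irr (val u) -> join_irr m.
Proof.
move=> u_irr uL_red.
have u_msucc : val u = msucc by rewrite (punct_join_irr_msucc u_irr uL_red).
have [c u_covers] := cards1P u_irr.
have cover_u v : covers u v -> v = c.
  by move=> uv; apply/set1P; rewrite -u_covers inE.
have [c' msucc_c' c'm] : exists2 c', covers msucc c' & c' != m.
  case: (pickP [pred y | covers msucc y && (y != m)]) => [y /andP[]|none].
    by exists y.
  move: uL_red; rewrite u_msucc /join_irr.
  suff -> : [set y | covers msucc y] = [set m] by rewrite cards1.
  apply/setP => y; rewrite !inE.
  apply/idP/eqP => [cy|->]; last exact: covers_msucc.
  by apply/eqP; move: (none y); rewrite /= cy => /negbFE.
have c'_c : Punct c'm = c.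
  by apply: cover_u; apply: punct_covers; rewrite u_msucc.
have below y : y < m -> y <= c'.
  move=> ym; have yn : y != m by rewrite lt_eqF.
  have : Punct yn < u by rewrite punct_ltE /= u_msucc (lt_trans ym lt_msucc).
  case/exists_lower_cover => v yv /cover_u v_c.
  by move: yv; rewrite v_c -c'_c punct_leE.
have m_c' : ~~ (m <= c').
  have c'_lt : c' < msucc by case/andP: msucc_c'.
  apply/negP => mc'; case/andP: covers_msucc => _ /forallP/(_ c').
  by rewrite c'_lt lt_neqAle eq_sym c'm mc'.
apply: (@join_irr_greatest_below _ _ _ (m `&` c')) => [|y ym].
  by rewrite lt_neqAle leIl andbT; apply: contra m_c' => /eqP <-; exact: leIr.
by rewrite lexI (ltW ym) below.
Qed.

Lemma upset_punct u : upset (val u) :\ m = val @: upset u.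
Proof.
apply/setP => y; rewrite !inE; apply/andP/imsetP => [[ym uy]|[v]].
  by exists (Punct ym); rewrite // inE punct_leE.
by rewrite inE punct_leE => uv ->; rewrite punct_neq.
Qed.

Lemma card_upset_punct u : #|upset (val u)| = ((val u <= m)%O + #|upset u|)%N.
Proof.
by rewrite (cardsD1 m) upset_punct card_imset; [rewrite inE | exact: val_inj].
Qed.

Lemma upset_m : upset m :\ m = val @: upset punct_msucc.
Proof.
apply/setP => y; rewrite !inE; apply/andP/imsetP => [[ym my]|[v]].
  exists (Punct ym); rewrite // inE punct_leE msucc_le //.
  by rewrite lt_neqAle eq_sym ym.
rewrite inE punct_leE => msucc_v ->.
by rewrite punct_neq (le_trans (ltW lt_msucc)).
Qed.

Lemma card_upset_m : #|upset m| = #|upset punct_msucc|.+1.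
Proof.
by rewrite (cardsD1 m) upset_m card_imset; [rewrite inE lexx | exact: val_inj].
Qed.

Lemma counterexample_card_punct : counterexample L -> (1 < #|{: P}|)%N.
Proof.
case=> L_gt1 L_ce; rewrite ltnNge; apply/negP => /fintype_le1P P_le1.
have eq_msucc y : y != m -> y = msucc.
  by move=> ym; have /(congr1 val) := P_le1 (Punct ym) punct_msucc.
have msucc_irr : join_irr msucc.
  apply: (join_irr_greatest_below lt_msucc) => y y_lt.
  have [->|ym] := eqVneq y m; first exact: lexx.
  by rewrite (eq_msucc y ym) ltxx in y_lt.
have upset_msucc : #|upset msucc| = 1.
  apply/eqP/cards1P; exists msucc; apply/setP => y; rewrite !inE.
  apply/idP/eqP => [|->//]; have [->|/eq_msucc -> //] := eqVneq y m.
  by move=> /(lt_le_trans lt_msucc); rewrite ltxx.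
by have := L_ce _ msucc_irr; rewrite upset_msucc; lia.
Qed.

Lemma min_counterexample_punct_small :
  min_counterexample L -> exists2 u : P, join_irr u & (2 * #|upset u| < #|L|)%N.
Proof.
move=> [[L_gt1 L_ce] L_min].
case: (pickP [pred u : P | join_irr u && (2 * #|upset u| < #|L|)%N]).
  by move=> u /andP[]; exists u.
move=> no_small; suff /L_min : counterexample P by rewrite card_punctured; lia.
split=> [|u u_irr]; first exact: counterexample_card_punct (conj L_gt1 L_ce).
have /negbT := no_small u; rewrite /= u_irr card_punctured -leqNgt.
(* The cardinals here come from different coercion paths and are only
   convertible; generalizing them lets [lia] identify them. *)
by move: #|L| #|upset u| L_gt1 => n a; lia.
Qed.

End Puncture.

Theorem theorem2p12 (disp : Order.disp_t) (L : finLatticeType disp) :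
  min_counterexample L ->
  forall m : L, meet_irr m ->
  exists j : L, [/\ join_irr j, j <= m & (2 * #|upset j| = #|L| + 1)%N].
Proof.
move=> L_min m m_irr; have [_ L_ce] := L_min.1.
have [j j_irr j_small] := min_counterexample_punct_small m_irr L_min.
have [jL_irr|jL_red] := boolP (join_irr (val j)).
  have jm : val j <= m.
    apply: contraTT (L_ce _ jL_irr) => /negbTE jm.
    by rewrite card_upset_punct jm -leqNgt; exact: ltnW.
  exists (val j); split=> //; have := L_ce _ jL_irr.
  rewrite card_upset_punct jm.
  by move: #|L| #|upset j| j_small => n a; lia.
have m_irrL := punct_join_irr_m j_irr jL_red.
exists m; split=> //; have := L_ce _ m_irrL.
rewrite card_upset_m -(punct_join_irr_msucc j_irr jL_red).
by move: #|L| #|upset j| j_small => n a; lia.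
Qed.
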